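(* Let $U$ be an isometry of $\mathbb{C}^{N\times N}$ or of $\ell^2(\mathbb{N})$, $\mathbf{N}=(N_1,\dots,N_r)$, $\mathbf{M}=(M_1,\dots,M_r)$ with $1\le N_1<\dots<N_r$, $1\le M_1<\dots<M_r$, and $\mathbf{s}=(s_1,\dots,s_r)\in\mathbb{N}^r$. Then for $k,l=1,\dots,r$, $$\kappa_{\mathbf{N},\mathbf{M}}(k,l)\le\min\Big\{\mu_{\mathbf{N},\mathbf{M}}(k,l)\cdot s_l,\ \sqrt{s_l\,\mu(P^{N_{k-1}}_{N_k}U)}\cdot\|P^{N_{k-1}}_{N_k}UP^{M_{l-1}}_{M_l}\|\Big\},$$ and, in the case $U\in\mathcal{B}(\ell^2(\mathbb{N}))$, for $k=1,\dots,r$, $$\kappa_{\mathbf{N},\mathbf{M}}(k,\infty)\le\min\Big\{\mu_{\mathbf{N},\mathbf{M}}(k,\infty)\cdot s_r,\ \sqrt{s_r\,\mu(P^{N_{k-1}}_{N_k}U)}\cdot\|P^{N_{k-1}}_{N_k}UP^\perp_{M_{r-1}}\|\Big\}.$$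
   Context: $N_0=M_0=0$. $P^a_b$ projects onto $\mathrm{span}\{e_{a+1},\dots,e_b\}$, $P^\perp_K=I-P_K$ with $P_K$ the projection onto the first $K$ coordinates. $\mu(A)=\sup_{i,j}|a_{ij}|^2$. $\mu_{\mathbf{N},\mathbf{M}}(k,l)=\sqrt{\mu(P^{N_{k-1}}_{N_k}UP^{M_{l-1}}_{M_l})\mu(P^{N_{k-1}}_{N_k}U)}$, $\mu_{\mathbf{N},\mathbf{M}}(k,\infty)=\sqrt{\mu(P^{N_{k-1}}_{N_k}UP^\perp_{M_{r-1}})\mu(P^{N_{k-1}}_{N_k}U)}$. With $\Theta=\{\eta:\|\eta\|_{\ell^\infty}\le1,\ |\mathrm{supp}(P^{M_{l-1}}_{M_l}\eta)|=s_l\ (l=1,\dots,r-1),\ |\mathrm{supp}(P^\perp_{M_{r-1}}\eta)|=s_r\}$, define $\kappa_{\mathbf{N},\mathbf{M}}(k,l)=\max_{\eta\in\Theta}\|P^{N_{k-1}}_{N_k}UP^{M_{l-1}}_{M_l}\eta\|_{\ell^\infty}\sqrt{\mu(P^{N_{k-1}}_{N_k}U)}$ and $\kappa_{\mathbf{N},\mathbf{M}}(k,\infty)=\max_{\eta\in\Theta}\|P^{N_{k-1}}_{N_k}UP^\perp_{M_{r-1}}\eta\|_{\ell^\infty}\sqrt{\mu(P^{N_{k-1}}_{N_k}U)}$. *)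

From mathcomp Require Import all_boot all_order all_algebra.
From mathcomp Require Import all_classical all_reals.
From mathcomp Require Import topology normedtype sequences.
From mathcomp Require Export complex.

Set Implicit Arguments.
Unset Strict Implicit.
Unset Printing Implicit Defensive.

Import Order.TTheory GRing.Theory Num.Theory.
Import numFieldNormedType.Exports.
Local Open Scope ring_scope.
Local Open Scope classical_set_scope.

Section Defs.
Variable R : realType.

Definition cabs (z : R[i]) : R := Normc.normc z.

(* vectors are complex sequences indexed by nat (coordinate i <-> e_{i+1});
   operators act on such sequences *)
Definition vec := nat -> R[i].
Definition oper := vec -> vec.

Definition l2 (x : vec) : Prop := cvgn (series (fun i => cabs (x i) ^+ 2)).
Definition l2norm (x : vec) : R :=
  Num.sqrt (limn (series (fun i => cabs (x i) ^+ 2))).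

Definition l2_isometry (U : oper) : Prop :=
  (forall (a : R[i]) (x y : vec), l2 x -> l2 y ->
     U (fun i => a * x i + y i) = (fun i => a * U x i + U y i)) /\
  (forall x : vec, l2 x -> l2 (U x) /\ l2norm (U x) = l2norm x).

Definition mx_isometry (N : nat) (U : 'M[R[i]]_N) : Prop :=
  (map_mx conjc U)^T *m U = 1%:M.

(* the operator on C^N (vectors supported on coordinates 0..N-1) given by U *)
Definition mx_oper (N : nat) (U : 'M[R[i]]_N) : oper :=
  fun x i => if insub i : option 'I_N is Some i' then
               \sum_(j < N) U i' j * x j else 0.

(* P^a_b : projection onto span{e_{a+1},...,e_b}, i.e. coordinates a..b-1 *)
Definition Pab (a b : nat) (x : vec) : vec :=
  fun i => if (a <= i < b)%N then x i else 0.
(* P^perp_K = I - P_K : kills the first K coordinates *)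
Definition Pperp (K : nat) (x : vec) : vec :=
  fun i => if (K <= i)%N then x i else 0.

Definition ebasis (j : nat) : vec := fun i => (i == j)%:R.

Definition entry (A : oper) (i j : nat) : R[i] := A (ebasis j) i.
Definition mu (A : oper) : R :=
  sup [set cabs (entry A p.1 p.2) ^+ 2 | p in [set: nat * nat]].

Definition linf (x : vec) : R := sup [set cabs (x i) | i in [set: nat]].

Definition opnorm (A : oper) : R :=
  sup [set l2norm (A x) | x in [set x : vec | l2 x /\ l2norm x <= 1]].

Definition supp_card (A : pred nat) (x : vec) (s : nat) : Prop :=
  exists S : seq nat, [/\ uniq S, size S = s &
    forall j, (A j && (x j != 0)) = (j \in S)].

(* The set Theta; [dom] describes the ambient space (coordinates j with
   dom j; [fun j => j < N] for C^N, [predT] for l^2(N)).  The sequences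
   N = (N_k)_k, M = (M_k)_k are given as functions with N_0 = M_0 = 0. *)
Definition Theta (dom : pred nat) (M : nat -> nat) (s : nat -> nat) (r : nat)
  : set vec :=
  [set eta | [/\ (forall j, ~~ dom j -> eta j = 0),
     (forall j, cabs (eta j) <= 1),
     (forall l, (1 <= l <= r.-1)%N ->
        supp_card (fun j => (M l.-1 <= j < M l)%N) eta (s l)) &
     supp_card (fun j => (M r.-1 <= j)%N) eta (s r)]].

Definition muNM (U : oper) (N M : nat -> nat) (k l : nat) : R :=
  Num.sqrt (mu (fun x => Pab (N k.-1) (N k) (U (Pab (M l.-1) (M l) x)))
            * mu (fun x => Pab (N k.-1) (N k) (U x))).
Definition muNM_inf (U : oper) (N M : nat -> nat) (r k : nat) : R :=
  Num.sqrt (mu (fun x => Pab (N k.-1) (N k) (U (Pperp (M r.-1) x)))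
            * mu (fun x => Pab (N k.-1) (N k) (U x))).

(* kappa_{N,M}(k,l) and kappa_{N,M}(k,oo) (max over Theta, taken as a sup) *)
Definition kappaNM (dom : pred nat) (U : oper) (N M s : nat -> nat) (r k l : nat)
  : R :=
  sup [set linf (Pab (N k.-1) (N k) (U (Pab (M l.-1) (M l) eta)))
           * Num.sqrt (mu (fun x => Pab (N k.-1) (N k) (U x)))
      | eta in Theta dom M s r].
Definition kappaNM_inf (dom : pred nat) (U : oper) (N M s : nat -> nat)
  (r k : nat) : R :=
  sup [set linf (Pab (N k.-1) (N k) (U (Pperp (M r.-1) eta)))
           * Num.sqrt (mu (fun x => Pab (N k.-1) (N k) (U x)))
      | eta in Theta dom M s r].

End Defs.

From mathcomp Require Import all_boot all_order all_algebra.
From mathcomp Require Import all_classical all_reals.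
From mathcomp Require Import topology normedtype sequences complex.
Set Implicit Arguments.
Unset Strict Implicit.
Unset Printing Implicit Defensive.

Import Order.TTheory GRing.Theory Num.Theory.
Import numFieldNormedType.Exports.
Local Open Scope ring_scope.
Local Open Scope classical_set_scope.

(* Write B for the block P^{N_{k-1}}_{N_k} U P^{M_{l-1}}_{M_l} (or with
   P^perp_{M_{r-1}}) and C for P^{N_{k-1}}_{N_k} U.  For eta in Theta only the
   at most s coordinates of eta in the column window of B matter, so
   B eta = sum_{j in S} eta_j B e_j with |S| <= s and |eta_j| <= 1.
   Bounding every entry of B by sqrt(mu B) gives |(B eta)_i| <= s sqrt(mu B);
   bounding the sup norm by the l^2 norm and B (eta / sqrt s) by ||B|| gives
   ||B eta||_oo <= sqrt s ||B||.  Multiplying by sqrt(mu C) yields the two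
   terms of the minimum.  Both kinds of isometries enter only through
   linearity on finitely supported vectors and boundedness of their entries
   and blocks. *)

Section Vectors.
Variable R : realType.
Implicit Types (x y : vec R) (z : R[i]).
Local Notation sqrt := Num.sqrt.

Lemma cabs_ge0 z : 0 <= cabs z.
Proof. by case: z => a b; apply: sqrtr_ge0. Qed.

Lemma cabs0 : cabs (0 : R[i]) = 0.
Proof. exact: Normc.normc0. Qed.

Lemma cabs1 : cabs (1 : R[i]) = 1.
Proof. exact: Normc.normc1. Qed.

Lemma cabsM z1 z2 : cabs (z1 * z2) = cabs z1 * cabs z2.
Proof. exact: Normc.normcM. Qed.

Lemma cabs_sum (I : Type) (s : seq I) (F : I -> R[i]) :
  cabs (\sum_(j <- s) F j) <= \sum_(j <- s) cabs (F j).
Proof.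
elim: s => [|a s IH]; first by rewrite !big_nil cabs0.
by rewrite !big_cons; apply: le_trans (le_normcD _ _) _; apply: lerD.
Qed.

Lemma cabs_real (c : R) : cabs (c%:C)%C = `|c|.
Proof. by rewrite /cabs /= expr0n /= addr0 sqrtr_sqr. Qed.

(* [Pab a b] and [Pperp K] are, up to conversion, masks by interval predicates. *)
Definition mask (P : pred nat) x : vec R := fun i => if P i then x i else 0.

Definition support_below n x := forall i, (n <= i)%N -> x i = 0.

Lemma series_support_below n x m : support_below n x -> (n <= m)%N ->
  series (fun i => cabs (x i) ^+ 2) m = \sum_(i < n) cabs (x i) ^+ 2.
Proof.
move=> hx nm; rewrite /series /= (@big_cat_nat _ _ _ n 0 m _ _ (leq0n n) nm) /= big_mkord.
rewrite [X in _ + X]big1_seq ?addr0 // => i /andP[_].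
by rewrite mem_index_iota => /andP[/hx -> _]; rewrite cabs0 expr0n.
Qed.

Lemma cvg_series_support_below n x : support_below n x ->
  series (fun i => cabs (x i) ^+ 2) @ \oo --> \sum_(i < n) cabs (x i) ^+ 2.
Proof.
move=> hx; apply: cvg_near_cst; exists n => // m /= nm.
exact: series_support_below.
Qed.

Lemma l2_support_below n x : support_below n x -> l2 x.
Proof.
by move/cvg_series_support_below => h; apply/cvg_ex; exists (\sum_(i < n) cabs (x i) ^+ 2).
Qed.

Lemma l2norm_support_below n x : support_below n x ->
  l2norm x = sqrt (\sum_(i < n) cabs (x i) ^+ 2).
Proof. by move/cvg_series_support_below/cvg_lim => h; rewrite /l2norm h. Qed.

Lemma l2norm0 : l2norm (fun _ => 0 : R[i]) = 0.
Proof. by rewrite (@l2norm_support_below 0) // big_ord0 sqrtr0. Qed.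

Lemma l2norm_ebasis j : l2norm (ebasis R j) = 1.
Proof.
have supp : support_below j.+1 (ebasis R j) by move=> i ji; rewrite /ebasis gtn_eqF.
rewrite (l2norm_support_below supp) big_ord_recr /= big1 ?add0r.
  by rewrite /ebasis eqxx cabs1 expr1n sqrtr1.
by move=> i _; rewrite /ebasis ltn_eqF // cabs0 expr0n.
Qed.

Lemma l2norm_scale c n y : support_below n y ->
  l2norm (fun i => c * y i) = cabs c * l2norm y.
Proof.
move=> hy; have hcy : support_below n (fun i => c * y i).
  by move=> i /hy ->; rewrite mulr0.
rewrite (l2norm_support_below hcy) (l2norm_support_below hy).
under eq_bigr do rewrite cabsM exprMn.
by rewrite -mulr_sumr sqrtrM ?sqr_ge0 // sqrtr_sqr ger0_norm ?cabs_ge0.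
Qed.

Lemma l2norm_le_support_below n x (K : R) : support_below n x ->
  (forall i, cabs (x i) <= K) -> l2norm x <= sqrt (\sum_(i < n) K ^+ 2).
Proof.
move=> hx hK; rewrite (l2norm_support_below hx) ler_sqrt; last first.
  by apply: sumr_ge0 => i _; apply: sqr_ge0.
by apply: ler_sum => i _; rewrite !expr2 ler_pM ?cabs_ge0.
Qed.

Lemma nondecreasing_series_sqr x :
  nondecreasing_seq (series (fun i => cabs (x i) ^+ 2)).
Proof. by apply: (@nondecreasing_series _ _ xpredT 0) => n _ _; apply: sqr_ge0. Qed.

Lemma sqr_cabs_le_lim x i : l2 x ->
  cabs (x i) ^+ 2 <= limn (series (fun i => cabs (x i) ^+ 2)).
Proof.
move=> hx; apply: le_trans (nondecreasing_cvgn_le (nondecreasing_series_sqr x) hx i.+1).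
rewrite /series /= big_nat_recr //=; apply: ler_wpDl => //.
by apply: sumr_ge0 => j _; apply: sqr_ge0.
Qed.

Lemma cabs_le_l2norm x i : l2 x -> cabs (x i) <= l2norm x.
Proof.
move=> /(sqr_cabs_le_lim i) h.
by rewrite -[cabs _]ger0_norm ?cabs_ge0 // -sqrtr_sqr ler_sqrt // (le_trans _ h) ?sqr_ge0.
Qed.

Lemma l2_mask P x : l2 x -> l2 (mask P x) /\ l2norm (mask P x) <= l2norm x.
Proof.
move=> hx; have le i : cabs (mask P x i) ^+ 2 <= cabs (x i) ^+ 2.
  by rewrite /mask; case: (P i); rewrite ?cabs0 ?expr0n ?sqr_ge0.
have hm : l2 (mask P x) by apply: (series_le_cvg _ _ le hx) => i; apply: sqr_ge0.
split=> //; rewrite /l2norm ler_sqrt; last first.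
  exact: le_trans (sqr_ge0 _) (sqr_cabs_le_lim 0 hx).
by apply: ler_lim => //; apply: nearW => n; apply: ler_sum.
Qed.

Lemma linf_le y b : (forall i, cabs (y i) <= b) -> linf y <= b.
Proof. by move=> h; apply: ge_sup => [|_ [i _ <-]] //; exists (cabs (y 0%N)), 0%N. Qed.

Lemma sup_ge0 (E : set R) : (exists e, E e) -> (forall e, E e -> 0 <= e) -> 0 <= sup E.
Proof.
move=> [e Ee] H; case: (pselect (has_ubound E)) => h.
  exact: le_trans (H e Ee) (ub_le_sup h Ee).
by rewrite sup_out // => -[].
Qed.

Lemma sup_image_le (T : Type) (F : T -> R) (A : set T) b : 0 <= b ->
  (forall t, A t -> F t <= b) -> sup [set F t | t in A] <= b.
Proof.
move=> b0 H; case: (pselect (exists t, A t)) => [[t At]|nA].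
  by apply: ge_sup => [|_ [u Au <-]]; [exists (F t), t | apply: H].
suff -> : [set F t | t in A] = set0 by rewrite sup0.
by apply/seteqP; split => // y [t At _]; apply: nA; exists t.
Qed.

Lemma mu_ge0 (A : oper R) : 0 <= mu A.
Proof.
apply: sup_ge0 => [|_ [p _ <-]]; last exact: sqr_ge0.
by exists (cabs (entry A 0%N 0%N) ^+ 2), (0%N, 0%N).
Qed.

Lemma opnorm_ge0 (A : oper R) : 0 <= opnorm A.
Proof.
apply: sup_ge0 => [|_ [x _ <-]]; last exact: sqrtr_ge0.
exists (l2norm (A (fun _ => 0))), (fun _ => 0) => //.
by split; [exact: (@l2_support_below 0%N) | rewrite l2norm0].
Qed.

Definition bounded_entries (A : oper R) := exists K, forall i j, cabs (entry A i j) <= K.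

Definition bounded_on_l2 (A : oper R) :=
  exists K, forall x, l2 x -> l2norm x <= 1 -> l2norm (A x) <= K.

Lemma cabs_entry_le_sqrt_mu (A : oper R) i j : bounded_entries A ->
  cabs (entry A i j) <= sqrt (mu A).
Proof.
move=> [K HK]; rewrite -[cabs _]ger0_norm ?cabs_ge0 // -sqrtr_sqr ler_sqrt ?mu_ge0 //.
apply: ub_le_sup; last by exists (i, j).
exists (K ^+ 2) => _ [[i' j'] _ <-] /=.
by rewrite !expr2 ler_pM ?cabs_ge0.
Qed.

Lemma l2norm_le_opnorm (A : oper R) x : bounded_on_l2 A ->
  l2 x -> l2norm x <= 1 -> l2norm (A x) <= opnorm A.
Proof.
move=> [K HK] l2x nx; apply: ub_le_sup; last by exists x.
by exists K => _ [y [l2y ny] <-]; apply: HK.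
Qed.

End Vectors.

Section Blocks.
Variable R : realType.
Implicit Types (x y : vec R) (U : oper R) (S : seq nat) (d : nat -> R[i]).
Local Notation sqrt := Num.sqrt.

Definition fin_supp x := exists n, support_below n x.

Definition fin_linear U := forall a x y, fin_supp x -> fin_supp y ->
  U (fun i => a * x i + y i) = (fun i => a * U x i + U y i).

Definition lincomb S d : vec R := fun i => \sum_(j <- S) d j * ebasis R j i.

Lemma fin_supp0 : fin_supp (fun _ => 0 : R[i]).
Proof. by exists 0%N. Qed.

Lemma fin_supp_ebasis j : fin_supp (ebasis R j).
Proof. by exists j.+1 => i ji; rewrite /ebasis gtn_eqF. Qed.

Lemma fin_supp_lin a x y : fin_supp x -> fin_supp y -> fin_supp (fun i => a * x i + y i).
Proof.
move=> [n hn] [m hm]; exists (maxn n m) => i.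
by rewrite geq_max => /andP[/hn -> /hm ->]; rewrite mulr0 addr0.
Qed.

Lemma lincomb_cons a S d :
  lincomb (a :: S) d = fun i => d a * ebasis R a i + lincomb S d i.
Proof. by apply: funext => i; rewrite /lincomb big_cons. Qed.

Lemma fin_supp_lincomb S d : fin_supp (lincomb S d).
Proof.
elim: S => [|a S IH]; first by exists 0%N => i _; rewrite /lincomb big_nil.
by rewrite lincomb_cons; apply: fin_supp_lin => //; apply: fin_supp_ebasis.
Qed.

Lemma lincomb_uniq S d i : uniq S -> lincomb S d i = if i \in S then d i else 0.
Proof.
elim: S => [|a S IH] /=; first by rewrite /lincomb big_nil.
move=> /andP[aS uS]; rewrite lincomb_cons /= IH // in_cons /ebasis.
have [->|ne] /= := eqVneq i a; first by rewrite (negbTE aS) mulr1 addr0.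
by rewrite mulr0 add0r.
Qed.

Lemma l2norm_lincomb_le S d (b : R) : uniq S -> 0 <= b ->
  (forall j, cabs (d j) <= b) -> l2norm (lincomb S d) <= sqrt (size S)%:R * b.
Proof.
move=> uS b0 hd; have [n hn] := fin_supp_lincomb S d.
rewrite (l2norm_support_below hn) -[b]ger0_norm // -sqrtr_sqr -sqrtrM ?ler0n //.
rewrite ler_sqrt ?mulr_ge0 ?ler0n ?sqr_ge0 //.
apply: (@le_trans _ _ (\sum_(i < n) ((i : nat) \in S)%:R * b ^+ 2)).
  apply: ler_sum => i _; rewrite lincomb_uniq //; case: ifP => _.
    by rewrite mul1r !expr2 ler_pM ?cabs_ge0.
  by rewrite cabs0 expr0n mul0r.
rewrite -mulr_suml ler_wpM2r ?sqr_ge0 //.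
rewrite -(big_mkord xpredT (fun i => (i \in S)%:R)) -natr_sum ler_nat.
rewrite (eq_bigr (fun i => if i \in S then 1 else 0)%N) => [|i _]; last first.
  by case: (i \in S).
rewrite -big_mkcond sum1_count -size_filter uniq_leq_size ?filter_uniq ?iota_uniq //.
by move=> i; rewrite mem_filter => /andP[].
Qed.

Lemma fin_linear0 U : fin_linear U -> U (fun _ => 0) = fun _ => 0.
Proof.
move=> HU; have := HU 1 _ _ fin_supp0 fin_supp0.
have -> : (fun i : nat => 1 * (fun=> 0 : R[i]) i + (fun=> 0) i) = fun=> 0.
  by apply: funext => i; rewrite mulr0 addr0.
move=> h; apply: funext => i; have /eqP := congr1 (fun f => f i) h.
by rewrite mul1r -{1}[U _ i]addr0 (inj_eq (addrI _)) => /eqP <-.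
Qed.

Lemma fin_linear_lincomb U S d : fin_linear U ->
  U (lincomb S d) = fun i => \sum_(j <- S) d j * entry U i j.
Proof.
move=> HU; elim: S => [|a S IH].
  have -> : lincomb [::] d = fun _ => 0 by apply: funext => i; rewrite /lincomb big_nil.
  by rewrite fin_linear0 //; apply: funext => i; rewrite big_nil.
rewrite lincomb_cons HU ?IH; [|exact: fin_supp_ebasis|exact: fin_supp_lincomb].
by apply: funext => i; rewrite big_cons.
Qed.

Definition block U (P J : pred nat) : oper R := fun x => mask P (U (mask J x)).

Lemma entry_block U (P J : pred nat) i j : fin_linear U ->
  entry (block U P J) i j = if J j && P i then entry U i j else 0.
Proof.
move=> HU; rewrite /entry /block /mask.
have [Jj|NJj] := boolP (J j).
  congr (if _ then U _ i else _); apply: funext => i'.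
  by rewrite /ebasis; case: eqVneq => [->|]; rewrite ?Jj ?if_same.
have -> : (fun i' => if J i' then ebasis R j i' else 0) = fun _ => 0.
  by apply: funext => i'; rewrite /ebasis; case: eqVneq => [->|]; rewrite ?(negbTE NJj) ?if_same.
by rewrite fin_linear0 // if_same.
Qed.

Lemma block_lincomb U (P J : pred nat) S d : fin_linear U -> {subset S <= J} ->
  block U P J (lincomb S d) = fun i => \sum_(j <- S) d j * entry (block U P J) i j.
Proof.
move=> HU SJ; have {}SJ j : j \in S -> J j by move/SJ.
rewrite {1}/block; have -> : mask J (lincomb S d) = lincomb S d.
  apply: funext => i; rewrite /mask; case Ji: (J i) => //; symmetry.
  apply: big1_seq => j /andP[_ jS]; rewrite /ebasis.
  by case: eqVneq => [eij|_]; rewrite ?mulr0 //; move: (SJ _ jS); rewrite -eij Ji.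
rewrite fin_linear_lincomb //; apply: funext => i; rewrite /mask.
under [RHS]eq_big_seq => j jS do rewrite entry_block // SJ //=.
by case: (P i) => //; rewrite big1 // => j _; rewrite mulr0.
Qed.

Lemma bounded_entries_block U (P J : pred nat) : fin_linear U ->
  bounded_entries U -> bounded_entries (block U P J).
Proof.
move=> HU [K HK]; exists (Num.max K 0) => i j; rewrite entry_block //.
by case: ifP; rewrite ?cabs0 le_max ?lexx ?HK ?orbT.
Qed.

Lemma support_below_block U (P J : pred nat) x nP :
  (forall i, (nP <= i)%N -> ~~ P i) -> support_below nP (block U P J x).
Proof. by move=> P_bnd i /P_bnd Pi; rewrite /block /mask (negbTE Pi). Qed.

End Blocks.

Section BlockOnSparse.
Variable R : realType.
Local Notation sqrt := Num.sqrt.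
Variables (U : oper R) (P J : pred nat) (eta : vec R) (S : seq nat).
Hypotheses (U_lin : fin_linear U) (S_uniq : uniq S)
  (S_supp : forall j, (J j && (eta j != 0)) = (j \in S))
  (eta_le1 : forall j, cabs (eta j) <= 1).
Local Notation B := (block U P J).

Let S_sub_J : {subset S <= J}.
Proof. by move=> j; rewrite -S_supp => /andP[]. Qed.

Lemma block_sparse : B eta = fun i => \sum_(j <- S) eta j * entry B i j.
Proof.
rewrite -(block_lincomb P eta U_lin S_sub_J); congr (mask P (U _)).
apply: funext => i.
rewrite /mask lincomb_uniq // -S_supp.
by case: (J i) => //=; case: eqVneq.
Qed.

Lemma cabs_block_sparse_le i : bounded_entries U ->
  cabs (B eta i) <= (size S)%:R * sqrt (mu B).
Proof.
move=> /(bounded_entries_block P J U_lin) B_entries; rewrite block_sparse.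
rewrite mulr_natl -iter_addr_0 -count_predT -big_const_seq /=.
apply: le_trans (cabs_sum _ _) (ler_sum _ _) => j _; rewrite cabsM -[X in _ <= X]mul1r.
by rewrite ler_pM ?cabs_ge0 ?cabs_entry_le_sqrt_mu.
Qed.

Lemma l2norm_block_sparse_le nP : (forall i, (nP <= i)%N -> ~~ P i) ->
  bounded_on_l2 B -> l2norm (B eta) <= sqrt (size S)%:R * opnorm B.
Proof.
move=> P_bnd B_bnd; have [S0|S_ne] := eqVneq S [::].
  have -> : B eta = fun _ => 0.
    by rewrite block_sparse S0; apply: funext => i; rewrite big_nil.
  by rewrite l2norm0 mulr_ge0 ?sqrtr_ge0 ?opnorm_ge0.
have sqrtS_gt0 : 0 < sqrt (size S)%:R :> R by rewrite sqrtr_gt0 ltr0n lt0n size_eq0.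
set c : R := (sqrt (size S)%:R)^-1; have c_gt0 : 0 < c by rewrite invr_gt0.
set x := lincomb S (fun j => c%:C%C * eta j).
have Bx : B x = fun i => c%:C%C * B eta i.
  rewrite (block_lincomb P _ U_lin S_sub_J) block_sparse.
  apply: funext => i; rewrite mulr_sumr.
  by apply: eq_bigr => j _; rewrite mulrA.
have x_le1 : l2norm x <= 1.
  apply: le_trans (l2norm_lincomb_le S_uniq (ltW c_gt0) _) _ => [j|].
    by rewrite cabsM cabs_real gtr0_norm // -[X in _ <= X]mulr1 ler_pM2l.
  by rewrite /c mulfV ?gt_eqF.
have [n x_supp] := fin_supp_lincomb S (fun j => c%:C%C * eta j).
have := l2norm_le_opnorm B_bnd (l2_support_below x_supp) x_le1.
by rewrite Bx (l2norm_scale _ (support_below_block U J eta P_bnd)) cabs_real gtr0_norm // ler_pdivrMl.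
Qed.

Lemma linf_block_sparse_le nP s : (forall i, (nP <= i)%N -> ~~ P i) ->
  bounded_entries U -> bounded_on_l2 B -> (size S <= s)%N ->
  linf (B eta) * sqrt (mu (fun x => mask P (U x))) <=
  Num.min (sqrt (mu B * mu (fun x => mask P (U x))) * s%:R)
          (sqrt (s%:R * mu (fun x => mask P (U x))) * opnorm B).
Proof.
move=> P_bnd U_ent B_bnd Ss; set C := fun x => mask P (U x).
have sqrtC_ge0 : 0 <= sqrt (mu C) by apply: sqrtr_ge0.
have Ss' : (size S)%:R <= s%:R :> R by rewrite ler_nat.
rewrite le_min; apply/andP; split.
  have : linf (B eta) <= s%:R * sqrt (mu B).
    apply: linf_le => i; apply: le_trans (cabs_block_sparse_le i U_ent) _.
    by rewrite ler_wpM2r ?sqrtr_ge0.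
  move/(ler_wpM2r sqrtC_ge0)/le_trans; apply.
  by rewrite sqrtrM ?mu_ge0 // [_ * s%:R]mulrC mulrA.
have : linf (B eta) <= sqrt s%:R * opnorm B.
  apply: linf_le => i.
  apply: le_trans (cabs_le_l2norm i (l2_support_below (support_below_block U J eta P_bnd))) _.
  apply: le_trans (l2norm_block_sparse_le P_bnd B_bnd) _.
  by rewrite ler_wpM2r ?opnorm_ge0 ?ler_sqrt.
move/(ler_wpM2r sqrtC_ge0)/le_trans; apply.
by rewrite sqrtrM ?ler0n // mulrAC.
Qed.

End BlockOnSparse.

Section Kappa.
Variable R : realType.
Local Notation sqrt := Num.sqrt.

Lemma Theta_window_supp (dom : pred nat) (Ms s : nat -> nat) r l (eta : vec R) :
  (1 <= l <= r)%N -> Theta dom Ms s r eta ->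
  exists S, [/\ uniq S, (size S <= s l)%N &
    forall j, ((Ms l.-1 <= j < Ms l)%N && (eta j != 0)) = (j \in S)].
Proof.
move=> /andP[l1 lr] [_ _ supp_mid [S [uS sz HS]]].
have [ltlr|] := ltnP l r.
  have [S' [uS' sz' HS']] : supp_card (fun j => (Ms l.-1 <= j < Ms l)%N) eta (s l).
    by apply: supp_mid; rewrite l1 -ltnS prednK ?(leq_trans l1 lr).
  by exists S'; rewrite sz'.
move=> rl; have -> : l = r by apply/eqP; rewrite eqn_leq lr.
exists [seq j <- S | (Ms r.-1 <= j < Ms r)%N]; split.
- exact: filter_uniq.
- by rewrite size_filter -sz count_size.
- move=> j; rewrite mem_filter -HS.
  by case/boolP: (Ms r.-1 <= j < Ms r)%N => // /andP[-> _].
Qed.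

Variable U : oper R.
Hypotheses (U_lin : fin_linear U) (U_ent : bounded_entries U)
  (U_blocks : forall P J : pred nat, bounded_on_l2 (block U P J)).
Variables (dom : pred nat) (Ns Ms s : nat -> nat) (r k : nat).

Let row_window_bounded i : (Ns k <= i)%N -> ~~ (Ns k.-1 <= i < Ns k)%N.
Proof. by move=> h; rewrite negb_and -leqNgt h orbT. Qed.

Lemma kappaNM_le_min l : (1 <= l <= r)%N ->
  kappaNM dom U Ns Ms s r k l <=
  Num.min (muNM U Ns Ms k l * (s l)%:R)
          (sqrt ((s l)%:R * mu (fun x => Pab (Ns k.-1) (Ns k) (U x)))
           * opnorm (fun x => Pab (Ns k.-1) (Ns k) (U (Pab (Ms l.-1) (Ms l) x)))).
Proof.
move=> hl; apply: sup_image_le => [|eta Theta_eta].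
  by rewrite le_min !mulr_ge0 ?sqrtr_ge0 ?ler0n ?opnorm_ge0.
have [S [uS sz HS]] := Theta_window_supp hl Theta_eta.
have [_ eta_le1 _ _] := Theta_eta.
exact: (linf_block_sparse_le U_lin uS HS eta_le1 row_window_bounded U_ent (U_blocks _ _) sz).
Qed.

Lemma kappaNM_inf_le_min :
  kappaNM_inf dom U Ns Ms s r k <=
  Num.min (muNM_inf U Ns Ms r k * (s r)%:R)
          (sqrt ((s r)%:R * mu (fun x => Pab (Ns k.-1) (Ns k) (U x)))
           * opnorm (fun x => Pab (Ns k.-1) (Ns k) (U (Pperp (Ms r.-1) x)))).
Proof.
apply: sup_image_le => [|eta [_ eta_le1 _ [S [uS sz HS]]]].
  by rewrite le_min !mulr_ge0 ?sqrtr_ge0 ?ler0n ?opnorm_ge0.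
exact: (linf_block_sparse_le U_lin uS HS eta_le1 row_window_bounded U_ent (U_blocks _ _) (eq_leq sz)).
Qed.

End Kappa.

Section Isometries.
Variable R : realType.
Implicit Types (x : vec R).
Local Notation sqrt := Num.sqrt.

Lemma l2_isometry_fin_linear (U : oper R) : l2_isometry U -> fin_linear U.
Proof.
by move=> [U_lin _] a x y [n hx] [m hy]; apply: U_lin; [exact: l2_support_below hx|exact: l2_support_below hy].
Qed.

Lemma l2_isometry_bounded_entries (U : oper R) : l2_isometry U -> bounded_entries U.
Proof.
move=> [_ U_iso]; exists 1 => i j; have [n hn] := fin_supp_ebasis R j.
have [l2U nU] := U_iso _ (l2_support_below hn).
by apply: le_trans (cabs_le_l2norm i l2U) _; rewrite nU l2norm_ebasis.
Qed.

Lemma l2_isometry_bounded_block (U : oper R) (P J : pred nat) :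
  l2_isometry U -> bounded_on_l2 (block U P J).
Proof.
move=> [_ U_iso]; exists 1 => x l2x nx.
have [l2Jx nJx] := l2_mask J l2x.
have [l2U nU] := U_iso _ l2Jx.
have [_ nPU] := l2_mask P l2U.
by apply: le_trans nPU _; rewrite nU (le_trans nJx).
Qed.

Variables (N : nat) (U : 'M[R[i]]_N).

Lemma mx_oper_fin_linear : fin_linear (mx_oper U).
Proof.
move=> a x y _ _; apply: funext => i; rewrite /mx_oper.
case: insub => [i'|]; last by rewrite mulr0 addr0.
by rewrite mulr_sumr -big_split; apply: eq_bigr => j _ /=; rewrite mulrDr mulrCA.
Qed.

Let K := \sum_(i' < N) \sum_(j < N) cabs (U i' j).

Let K_ge0 : 0 <= K.
Proof. by apply: sumr_ge0 => i _; apply: sumr_ge0 => j _; apply: cabs_ge0. Qed.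

Lemma cabs_mx_oper_le x i : (forall j, cabs (x j) <= 1) -> cabs (mx_oper U x i) <= K.
Proof.
move=> x_le1; rewrite /mx_oper; case: insubP => [i' _ _|_]; last by rewrite cabs0 K_ge0.
apply: le_trans (cabs_sum _ _) (le_trans (_ : _ <= \sum_(j < N) cabs (U i' j)) _).
  by apply: ler_sum => j _; rewrite cabsM ler_piMr ?cabs_ge0.
rewrite /K [X in _ <= X](bigD1 i') //= lerDl.
by apply: sumr_ge0 => i1 _; apply: sumr_ge0 => j1 _; apply: cabs_ge0.
Qed.

Lemma mx_oper_bounded_entries : bounded_entries (mx_oper U).
Proof.
exists K => i j; apply: cabs_mx_oper_le => j'; rewrite /ebasis.
by case: eqVneq; rewrite ?cabs1 ?cabs0 ?ler01.
Qed.

Lemma mx_oper_bounded_block (P J : pred nat) : bounded_on_l2 (block (mx_oper U) P J).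
Proof.
exists (sqrt (\sum_(i < N) K ^+ 2)) => x l2x nx.
apply: l2norm_le_support_below => [i Ni|i].
  by rewrite /block /mask /mx_oper insubN -?leqNgt // if_same.
rewrite /block /mask; case: (P i); last by rewrite cabs0 K_ge0.
apply: cabs_mx_oper_le => j; rewrite /mask; case: (J j); last by rewrite cabs0 ler01.
exact: le_trans (cabs_le_l2norm j l2x) nx.
Qed.

End Isometries.

Theorem lemma7p5 (R : realType) (r : nat) (Ns Ms s : nat -> nat) :
  (0 < r)%N -> Ns 0%N = 0%N -> Ms 0%N = 0%N ->
  (forall k, (k < r)%N -> (Ns k < Ns k.+1)%N) ->
  (forall k, (k < r)%N -> (Ms k < Ms k.+1)%N) ->
  (* U an isometry of C^{N x N} *)
  (forall (N : nat) (U : 'M[R[i]]_N), mx_isometry U ->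
     (Ns r <= N)%N -> (Ms r <= N)%N ->
     forall k l, (1 <= k <= r)%N -> (1 <= l <= r)%N ->
       kappaNM (fun j => (j < N)%N) (mx_oper U) Ns Ms s r k l <=
       Num.min (muNM (mx_oper U) Ns Ms k l * (s l)%:R)
               (Num.sqrt ((s l)%:R * mu (fun x => Pab (Ns k.-1) (Ns k) (mx_oper U x)))
                * opnorm (fun x => Pab (Ns k.-1) (Ns k)
                                     (mx_oper U (Pab (Ms l.-1) (Ms l) x))))) /\
  (* U an isometry of l^2(N) *)
  (forall U : oper R, l2_isometry U ->
     (forall k l, (1 <= k <= r)%N -> (1 <= l <= r)%N ->
       kappaNM predT U Ns Ms s r k l <=
       Num.min (muNM U Ns Ms k l * (s l)%:R)
               (Num.sqrt ((s l)%:R * mu (fun x => Pab (Ns k.-1) (Ns k) (U x)))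
                * opnorm (fun x => Pab (Ns k.-1) (Ns k) (U (Pab (Ms l.-1) (Ms l) x))))) /\
     (forall k, (1 <= k <= r)%N ->
       kappaNM_inf predT U Ns Ms s r k <=
       Num.min (muNM_inf U Ns Ms r k * (s r)%:R)
               (Num.sqrt ((s r)%:R * mu (fun x => Pab (Ns k.-1) (Ns k) (U x)))
                * opnorm (fun x => Pab (Ns k.-1) (Ns k) (U (Pperp (Ms r.-1) x)))))).
Proof.
move=> _ _ _ _ _; split.
  (* For matrices the bounds hold without using that U is an isometry. *)
  move=> N U _ _ _ k l _; apply: kappaNM_le_min.
  - exact: mx_oper_fin_linear.
  - exact: mx_oper_bounded_entries.
  - exact: mx_oper_bounded_block.
move=> U U_iso.
have U_lin := l2_isometry_fin_linear U_iso.
have U_ent := l2_isometry_bounded_entries U_iso.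
have U_blocks P J : bounded_on_l2 (block U P J) by exact: l2_isometry_bounded_block.
by split=> [k l _|k _]; [apply: kappaNM_le_min | apply: kappaNM_inf_le_min].
Qed.
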